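(* Let $n\ge 2$ and assume the standing assumptions in the context hold. Suppose $\operatorname{rank}(\Psi_{t,t+1})=n$ for all $1\le t\le\sigma-1$. Define $\Upsilon(t,t+1)=\hat{\mathcal O}_{t+1}^\dagger\mathcal Z_{t,t+1}\Psi_{t,t+1}^\dagger$ for $1\le t\le\sigma-1$. For $\mu\in\mathbb{S}$ define $$\Upsilon(\mu,1)=\Upsilon(1,2)^{-1}\Upsilon(2,3)^{-1}\cdots\Upsilon(\mu-1,\mu)^{-1},$$ with $\Upsilon(1,1)=I_n$. Set $$\check A_\mu=\Upsilon(\mu,1)\hat A_\mu\Upsilon(\mu,1)^{-1},\quad \check B_\mu=\Upsilon(\mu,1)\hat B_\mu,\quad \check C_\mu=\hat C_\mu\Upsilon(\mu,1)^{-1},\quad \check D_\mu=\hat D_\mu,$$ and let $\check{\mathcal P}=\{(\check A_\mu,\check B_\mu,\check C_\mu,\check D_\mu)\}_{\mu\in\mathbb{S}}$. Then $\Upsilon(\mu,1)=T_1^{-1}T_\mu$ for every $\mu$. Moreover, the LSS with discrete states $\check{\mathcal P}$ has the same input-output map as the true LSS. That is, for every hybrid input (arbitrary switching sequence, with no dwell-time restriction, and arbitrary continuous input) and every initial state $x(0)$, the output of the LSS with discrete states $\check{\mathcal P}$ started from $T_1^{-1}x(0)$ equals the output of the true LSS started from $x(0)$. In particular, the Markov parameters of the two systems coincide.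
   Context: **System data.** Consider the true LSS $$x(k+1)=A_{\varphi(k)}x(k)+B_{\varphi(k)}u(k),\qquad y(k)=C_{\varphi(k)}x(k)+D_{\varphi(k)}u(k),$$ with state dimension $n$ and discrete states $\mathcal P_j=(A_j,B_j,C_j,D_j)$, $j\in\mathbb{S}=\{1,\dots,\sigma\}$. Data $(u(k),\varphi(k),y(k))$, $k\in[1,N]$, are observed, and $\varphi$ is surjective onto $\mathbb{S}$. **Switching times and dwell times.** Write $k_0=1<k_1<\dots<k_{i^*}<k_{i^*+1}=N$, with $\varphi$ constant on each $[k_i,k_{i+1})$ and changing at each $k_i$, $1\le i\le i^*$. Set $\delta_*=\min_i(k_{i+1}-k_i)$. **Standing assumptions.** - Each $\mathcal P_j$ is minimal of McMillan degree $n$, has invertible $A_j$, and is BIBO stable. - $\delta_*\ge n$ for the observed data. - Estimates $\hat{\mathcal P}_j=(\hat A_j,\hat B_j,\hat C_j,\hat D_j)$, one per mode, satisfy $$\hat A_j=T_j^{-1}A_jT_j,\quad \hat B_j=T_j^{-1}B_j,\quad \hat C_j=C_jT_j,\quad \hat D_j=D_j$$ for unknown nonsingular $T_j$. **Constructions.** Let $q=\delta_*-1$, and let $$\hat{\mathcal O}_j=[\hat C_j^T\ (\hat C_j\hat A_j)^T\cdots(\hat C_j\hat A_j^{q})^T]^T.$$ Let $\hat\Gamma_j$ be the block lower-triangular Toeplitz matrix with $(q+1)\times(q+1)$ blocks, diagonal blocks $\hat D_j$, and $(r,s)$ block $\hat C_j\hat A_j^{r-s-1}\hat B_j$ for $r>s$.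 For $1\le i\le i^*$, write $\nu=\varphi(k_{i-1})$ and $\mu=\varphi(k_i)$, and define: - $\hat x(k_{i-1})=\hat{\mathcal O}_\nu^\dagger(Y_{i-1}-\hat\Gamma_\nu U_{i-1})$, with $Y_{i-1},U_{i-1}$ the stacked outputs and inputs over $[k_{i-1},k_{i-1}+q]$, and $X^\dagger=(X^TX)^{-1}X^T$; - $\kappa_{i-1}=\hat A_\nu^{k_i-k_{i-1}}\hat x(k_{i-1})+\sum_{l=k_{i-1}}^{k_i-1}\hat A_\nu^{k_i-l-1}\hat B_\nu u(l)$; - $\zeta_i(k)=y(k)-\hat D_\mu u(k)-\sum_{l=k_i}^{k-1}\hat C_\mu\hat A_\mu^{k-l-1}\hat B_\mu u(l)$ for $k\in[k_i,k_{i+1})$; - $Z_i=[\zeta_i(k_i)^T\cdots\zeta_i(k_i+q)^T]^T$. Let $\mathcal N_{\nu,\mu}=\{i\in[1,i^*]:\varphi(k_{i-1})=\nu,\ \varphi(k_i)=\mu\}$. Let $\Psi_{\nu,\mu}$ have columns $\kappa_{i-1}$ and $\mathcal Z_{\nu,\mu}$ have columns $Z_i$, for $i\in\mathcal N_{\nu,\mu}$ in increasing order. Set $\Psi^\dagger=\Psi^T(\Psi\Psi^T)^{-1}$. *)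

(* Modes are 0-based natural numbers 0..sigma-1. *)
From HB Require Import structures.
From mathcomp Require Import all_boot all_order all_algebra.
Set Implicit Arguments. Unset Strict Implicit. Unset Printing Implicit Defensive.
Import Order.TTheory GRing.Theory Num.Theory.
Local Open Scope ring_scope.

Section Defs.
Variable R : realFieldType.

Fixpoint mxpow (n : nat) (A : 'M[R]_n) (k : nat) : 'M[R]_n :=
  if k is k'.+1 then A *m mxpow A k' else 1%:M.

Lemma blk_mod_lt (q p : nat) (r : 'I_(q * p)) : (r %% p < p)%N.
Proof.
case: p r => [|p] r; last by rewrite ltn_pmod.
by case: r => /= r; rewrite muln0.
Qed.

Definition blk_row (q p : nat) (r : 'I_(q * p)) : 'I_p := Ordinal (blk_mod_lt r).

(* vertical stack [F 0; F 1; ...; F (q-1)] of q blocks of size p x c *)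
Definition colstack (q p c : nat) (F : nat -> 'M[R]_(p, c)) : 'M[R]_(q * p, c) :=
  \matrix_(r, j) F (r %/ p)%N (blk_row r) j.

(* q x q block matrix with (r,s) block F r s of size p x m (0-based) *)
Definition blockmx (q p m : nat) (F : nat -> nat -> 'M[R]_(p, m)) : 'M[R]_(q * p, q * m) :=
  \matrix_(r, s) F (r %/ p)%N (s %/ m)%N (blk_row r) (blk_row s).

Definition pinvL (a b : nat) (X : 'M[R]_(a, b)) : 'M[R]_(b, a) :=
  invmx (X^T *m X) *m X^T.
Definition pinvR (a b : nat) (X : 'M[R]_(a, b)) : 'M[R]_(b, a) :=
  X^T *m invmx (X *m X^T).

Variables n m p : nat.

Definition obsmx (q : nat) (C : 'M[R]_(p, n)) (A : 'M[R]_n) : 'M[R]_(q.+1 * p, n) :=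
  @colstack q.+1 p n (fun r => C *m mxpow A r).

Definition toeplitz (q : nat) (A : 'M[R]_n) (B : 'M[R]_(n, m)) (C : 'M[R]_(p, n))
  (D : 'M[R]_(p, m)) : 'M[R]_(q.+1 * p, q.+1 * m) :=
  @blockmx q.+1 p m (fun r s => if r == s then D
                               else if (s < r)%N then C *m mxpow A (r - s - 1) *m B
                               else 0).

Definition sigstack (q c : nat) (v : nat -> 'cV[R]_c) (k0 : nat) : 'cV[R]_(q.+1 * c) :=
  @colstack q.+1 c 1 (fun r => v (k0 + r)%N).

Fixpoint lss_state (A : nat -> 'M[R]_n) (B : nat -> 'M[R]_(n, m)) (phi : nat -> nat)
  (u : nat -> 'cV[R]_m) (x0 : 'cV[R]_n) (k : nat) : 'cV[R]_n :=
  if k is k'.+1 then A (phi k') *m lss_state A B phi u x0 k' + B (phi k') *m u k'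
  else x0.

Definition lss_out (A : nat -> 'M[R]_n) (B : nat -> 'M[R]_(n, m))
  (C : nat -> 'M[R]_(p, n)) (D : nat -> 'M[R]_(p, m)) (phi : nat -> nat)
  (u : nat -> 'cV[R]_m) (x0 : 'cV[R]_n) (k : nat) : 'cV[R]_p :=
  C (phi k) *m lss_state A B phi u x0 k + D (phi k) *m u k.

Definition bibo_stable (A : 'M[R]_n) (B : 'M[R]_(n, m)) (C : 'M[R]_(p, n))
  (D : 'M[R]_(p, m)) : Prop :=
  forall u : nat -> 'cV[R]_m,
    (exists M : R, forall k (i : 'I_m), `|u k i 0| <= M) ->
    exists M' : R, forall k (i : 'I_p),
      `|lss_out (fun=> A) (fun=> B) (fun=> C) (fun=> D) (fun=> 0%N) u 0 k i 0| <= M'.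

Definition minimal_lti (A : 'M[R]_n) (B : 'M[R]_(n, m)) (C : 'M[R]_(p, n)) : Prop :=
  forall (n' : nat) (A' : 'M[R]_n') (B' : 'M[R]_(n', m)) (C' : 'M[R]_(p, n')),
    (forall k, C' *m mxpow A' k *m B' = C *m mxpow A k *m B) -> (n <= n')%N.

(* product A_{w_last} ... A_{w_first} *)
Definition Aword (A : nat -> 'M[R]_n) (w : seq nat) : 'M[R]_n :=
  foldl (fun M i => A i *m M) 1%:M w.

Definition lss_markov (A : nat -> 'M[R]_n) (B : nat -> 'M[R]_(n, m))
  (C : nat -> 'M[R]_(p, n)) (j0 : nat) (w : seq nat) (j1 : nat) : 'M[R]_(p, m) :=
  C j1 *m Aword A w *m B j0.

Definition delta_star (ks : nat -> nat) (istar N : nat) : nat :=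
  \big[minn/N]_(i < istar.+1) (ks i.+1 - ks i)%N.

Section Construct.
Variables (hA : nat -> 'M[R]_n) (hB : nat -> 'M[R]_(n, m))
  (hC : nat -> 'M[R]_(p, n)) (hD : nat -> 'M[R]_(p, m))
  (y : nat -> 'cV[R]_p) (u : nat -> 'cV[R]_m) (phi : nat -> nat)
  (ks : nat -> nat) (istar N : nat).

Definition qq : nat := (delta_star ks istar N).-1.

Definition xhat (nu k0 : nat) : 'cV[R]_n :=
  pinvL (obsmx qq (hC nu) (hA nu)) *m
    (sigstack qq y k0 - toeplitz qq (hA nu) (hB nu) (hC nu) (hD nu) *m sigstack qq u k0).

(* kappa_{i-1}, with k0 = k_{i-1}, k1 = k_i *)
Definition kappa (nu k0 k1 : nat) : 'cV[R]_n :=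
  mxpow (hA nu) (k1 - k0) *m xhat nu k0
  + \sum_(k0 <= l < k1) mxpow (hA nu) (k1 - l - 1) *m hB nu *m u l.

(* zeta_i(k), with k1 = k_i *)
Definition zeta (mu k1 k : nat) : 'cV[R]_p :=
  y k - hD mu *m u k
  - \sum_(k1 <= l < k) hC mu *m mxpow (hA mu) (k - l - 1) *m hB mu *m u l.

Definition Zvec (mu k1 : nat) : 'cV[R]_(qq.+1 * p) := sigstack qq (zeta mu k1) k1.

Definition transitions (nu mu : nat) : seq nat :=
  [seq i <- iota 1 istar | (phi (ks i.-1) == nu) && (phi (ks i) == mu)].

Definition Psi (nu mu : nat) : 'M[R]_(n, size (transitions nu mu)) :=
  \matrix_(r, c) kappa nu (ks (nth 0 (transitions nu mu) c).-1)
                          (ks (nth 0 (transitions nu mu) c)) r 0.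

Definition Zmat (nu mu : nat) : 'M[R]_(qq.+1 * p, size (transitions nu mu)) :=
  \matrix_(r, c) Zvec mu (ks (nth 0 (transitions nu mu) c)) r 0.

(* Upsilon(t, t+1) (0-based modes t, t+1) *)
Definition Ups (t : nat) : 'M[R]_n :=
  pinvL (obsmx qq (hC t.+1) (hA t.+1)) *m Zmat t t.+1 *m pinvR (Psi t t.+1).

(* Upsilon(mu,1) = Ups(0)^-1 Ups(1)^-1 ... Ups(mu-1)^-1 ; identity for mu = 0 *)
Definition Ups1 (mu : nat) : 'M[R]_n :=
  foldr (fun t M => invmx (Ups t) *m M) 1%:M (iota 0 mu).

Definition checkA (mu : nat) : 'M[R]_n := Ups1 mu *m hA mu *m invmx (Ups1 mu).
Definition checkB (mu : nat) : 'M[R]_(n, m) := Ups1 mu *m hB mu.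
Definition checkC (mu : nat) : 'M[R]_(p, n) := hC mu *m invmx (Ups1 mu).
Definition checkD (mu : nat) : 'M[R]_(p, m) := hD mu.

End Construct.
End Defs.

(* Each estimated mode is the true one up to an unknown change of basis T_j.
   We prove that the matrices Upsilon(t, t+1) computed from the data equal
   T_{t+1}^-1 T_t, so that the chain Upsilon(mu, 1) equals T_0^-1 T_mu, and
   the "checked" modes are all the true modes transformed by the SINGLE matrix
   T_0; such a system has the input-output map and Markov parameters of the
   true one.

   Then, on the identification data, the stacked corrected outputs Z_i and the
   propagated estimates kappa_{i-1} are both expressed through the true state
   x(k_i); this gives Z_{t,t+1} = O_{t+1} T_{t+1}^-1 T_t Psi_{t,t+1}, from which
   the pseudo-inverses recover T_{t+1}^-1 T_t. *)

From HB Require Import structures.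
From mathcomp Require Import all_boot all_order all_algebra.
From mathcomp Require Import zify.
Set Implicit Arguments. Unset Strict Implicit. Unset Printing Implicit Defensive.
Import Order.TTheory GRing.Theory Num.Theory.
Local Open Scope ring_scope.

Section MatrixPowers.
Variable R : realFieldType.

Lemma mxpowE n (A : 'M[R]_n.+1) k : mxpow A k = A ^+ k.
Proof. by elim: k => [|k IH] //=; rewrite IH exprS mulmxE. Qed.

Lemma mxpowS n (A : 'M[R]_n) k : mxpow A k.+1 = mxpow A k *m A.
Proof.
elim: k => [|k IH] /=; first by rewrite mulmx1 mul1mx.
by rewrite -mulmxA -IH.
Qed.

Lemma mxpow_conj n (S A : 'M[R]_n) k : S \in unitmx ->
  mxpow (invmx S *m A *m S) k = invmx S *m mxpow A k *m S.
Proof.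
move=> hS; elim: k => [|k IH] /=; first by rewrite mulmx1 mulVmx.
by rewrite IH !mulmxA -(mulmxA _ S) mulmxV // mulmx1.
Qed.

Lemma similar_obs n p c (S A : 'M[R]_n) (C : 'M[R]_(p, n)) (v : 'M[R]_(n, c)) k :
  S \in unitmx -> (C *m S) *m mxpow (invmx S *m A *m S) k *m (invmx S *m v) =
  C *m mxpow A k *m v.
Proof.
move=> hS; rewrite mxpow_conj // !mulmxA -(mulmxA C) mulmxV // mulmx1.
by rewrite -(mulmxA _ S) mulmxV // mulmx1.
Qed.

Lemma invmx_of_right n (X Y : 'M[R]_n) : X *m Y = 1%:M -> invmx X = Y.
Proof.
move=> XY; have [uX _] := mulmx1_unit XY.
by rewrite -[RHS]mul1mx -(mulVmx uX) -mulmxA XY mulmx1.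
Qed.

End MatrixPowers.

Section Observability.
Variable R : realFieldType.

(* Cayley-Hamilton: every power A^k is a combination of I, A, ..., A^(n-1),
   with the coefficients of X^k mod the characteristic polynomial. *)
Lemma expmx_char_mod n (A : 'M[R]_n.+1) k :
  A ^+ k = \sum_(i < n.+1) ('X^k %% char_poly A)`_i *: A ^+ i.
Proof.
set r := 'X^k %% char_poly A.
have size_r : (size r <= n.+1)%N.
  by rewrite -ltnS -(size_char_poly A) ltn_modp monic_neq0 // char_poly_monic.
have Er : r = \sum_(i < n.+1) r`_i *: 'X^i by rewrite -poly_def -/(take_poly _ r) take_poly_id.
have -> : A ^+ k = horner_mx A r.
  have := congr1 (horner_mx A) (divp_eq 'X^k (char_poly A)).
  by rewrite rmorphD rmorphM /= Cayley_Hamilton mulr0 add0r rmorphXn /= horner_mx_X.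
rewrite {1}Er rmorph_sum; apply: eq_bigr => i _ /=.
by rewrite linearZ /= rmorphXn /= horner_mx_X.
Qed.

Lemma obs_block_in_span n q (C : 'M[R]_(q, n.+1)) (A : 'M[R]_n.+1) k :
  (C *m mxpow A k <= \sum_(i < n.+1) <<C *m mxpow A i>>)%MS.
Proof.
rewrite mxpowE expmx_char_mod mulmx_sumr; apply: summx_sub => i _.
rewrite -scalemxAr scalemx_sub //; apply: (sumsmx_sup i) => //.
by rewrite genmxE mxpowE.
Qed.

(* A subspace that contains the rows of C and is A-invariant carries a
   realization of the same Markov parameters, so minimality forces it to be
   the whole state space. *)
Lemma minimal_invariant_rank n m p r (A : 'M[R]_n) (B : 'M[R]_(n, m))
    (C : 'M[R]_(p, n)) (W : 'M[R]_(r, n)) :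
  minimal_lti A B C -> (C <= W)%MS -> (W *m A <= W)%MS -> (n <= \rank W)%N.
Proof.
move=> minABC CW WA; set K := row_base W.
have CK : (C <= K)%MS by rewrite eq_row_base.
have KA : (K *m A <= K)%MS by rewrite eq_row_base (eqmxMr _ (eq_row_base W)).
pose A' := K *m A *m pinvmx K; pose B' := K *m B; pose C' := C *m pinvmx K.
have A'K : A' *m K = K *m A by rewrite /A' mulmxKpV.
have C'K : C' *m K = C by rewrite /C' mulmxKpV.
have powK k : mxpow A' k *m K = K *m mxpow A k.
  elim: k => [|k IH] /=; first by rewrite mul1mx mulmx1.
  by rewrite -mulmxA IH mulmxA A'K -mulmxA.
apply: (minABC _ A' B' C') => k.
by rewrite /B' mulmxA -(mulmxA C') powK mulmxA C'K.
Qed.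

Lemma minimal_observable n m p (A : 'M[R]_n) (B : 'M[R]_(n, m)) (C : 'M[R]_(p, n))
    (v : 'cV[R]_n) :
  minimal_lti A B C -> (forall k, (k < n)%N -> C *m mxpow A k *m v = 0) -> v = 0.
Proof.
case: n A B C v => [|n] A B C v minABC Cv0; first by apply/matrixP => [[]].
set W := (\sum_(i < n.+1) <<C *m mxpow A i>>)%MS.
have WA : (W *m A <= W)%MS.
  rewrite sumsmxMr; apply/sumsmx_subP => i _.
  by rewrite (eqmxMr _ (genmxE _)) -mulmxA -mxpowS; apply: obs_block_in_span.
have CW : (C <= W)%MS by have := obs_block_in_span C A 0; rewrite /= mulmx1.
have /row_fullP[X XW] : row_full W.
  by rewrite /row_full eqn_leq rank_leq_col (minimal_invariant_rank minABC CW WA).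
have Wv : W *m v = 0.
  have [w ->] := sub_sumsmxP (submx_refl W).
  rewrite mulmx_suml big1 // => i _.
  have /submxP[Y ->] : (<<C *m mxpow A i>> <= C *m mxpow A i)%MS by rewrite genmxE.
  by rewrite -!mulmxA (mulmxA C) Cv0 // !mulmx0.
by rewrite -(mul1mx v) -XW -mulmxA Wv mulmx0.
Qed.

End Observability.

Section PseudoInverses.
Variable R : realFieldType.

Lemma row_gram_eq0 k (w : 'rV[R]_k) : w *m w^T = 0 -> w = 0.
Proof.
move=> ww0; apply/rowP => j; rewrite mxE.
have : (w *m w^T) 0 0 = 0 by rewrite ww0 mxE.
rewrite mxE => sum0.
have sq_ge0 (i : 'I_k) : predT i -> 0 <= w 0 i * w^T i 0.
  by move=> _; rewrite mxE -expr2 sqr_ge0.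
have := psumr_eq0P sq_ge0 sum0 (i := j) isT.
by rewrite mxE => /eqP; rewrite mulf_eq0 orbb => /eqP.
Qed.

Lemma pinvL_K a b (X : 'M[R]_(a, b)) :
  (forall v : 'cV_b, X *m v = 0 -> v = 0) -> pinvL X *m X = 1%:M.
Proof.
move=> injX; rewrite /pinvL -mulmxA mulVmx // -row_free_unit.
apply: inj_row_free => w wXX0.
have /row_gram_eq0 wXT0 : (w *m X^T) *m (w *m X^T)^T = 0.
  by rewrite trmx_mul trmxK mulmxA -(mulmxA w) wXX0 mul0mx.
have /injX wT0 : X *m w^T = 0.
  by rewrite -(trmxK (X *m w^T)) trmx_mul trmxK wXT0 trmx0.
by rewrite -(trmxK w) wT0 trmx0.
Qed.

Lemma pinvR_K a b (X : 'M[R]_(a, b)) : row_free X -> X *m pinvR X = 1%:M.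
Proof.
move=> freeX; rewrite /pinvR mulmxA mulmxV // -row_free_unit.
apply: inj_row_free => w wXXT0.
have /row_gram_eq0 wX0 : (w *m X) *m (w *m X)^T = 0.
  by rewrite trmx_mul mulmxA -(mulmxA w) wXXT0 mul0mx.
by apply/eqP; rewrite -(mulmx_free_eq0 _ freeX) wX0.
Qed.

End PseudoInverses.

Section BlockStacks.
Variable R : realFieldType.

Lemma blk_div_lt q p (r : 'I_(q * p)) : (r %/ p < q)%N.
Proof.
case: p r => [|p] r; first by case: r => /= r; rewrite muln0.
by rewrite ltn_divLR.
Qed.

Lemma colstack_ext q p c (F G : nat -> 'M[R]_(p, c)) :
  (forall r, (r < q)%N -> F r = G r) -> colstack q F = colstack q G.
Proof. by move=> FG; apply/matrixP => r j; rewrite !mxE FG // blk_div_lt. Qed.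

Lemma colstack_mul q p c d (F : nat -> 'M[R]_(p, c)) (v : 'M[R]_(c, d)) :
  colstack q F *m v = colstack q (fun r => F r *m v).
Proof. by apply/matrixP => r j; rewrite !mxE; apply: eq_bigr => k _; rewrite !mxE. Qed.

Lemma colstack_sub q p c (F G : nat -> 'M[R]_(p, c)) :
  colstack q F - colstack q G = colstack q (fun r => F r - G r).
Proof. by apply/matrixP => r j; rewrite !mxE. Qed.

Lemma colstack_eq0 q p c (F : nat -> 'M[R]_(p, c)) :
  colstack q F = 0 -> forall r, (r < q)%N -> F r = 0.
Proof.
move=> F0 r rq; apply/matrixP => i j.
have ri : (r * p + i < q * p)%N by have := ltn_ord i; nia.
have := congr1 (fun M : 'M[R]_(q * p, c) => M (Ordinal ri) j) F0; rewrite !mxE /=.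
have p_gt0 : (0 < p)%N by case: p i {F F0 ri} => [[]|].
have -> : ((r * p + i) %/ p = r)%N by rewrite divnMDl // divn_small // addn0.
suff -> : blk_row (Ordinal ri) = i by [].
by apply: val_inj => /=; rewrite modnMDl modn_small.
Qed.

Lemma sum_blocks q m (F : nat -> 'I_m -> R) :
  \sum_(s < q * m) F (s %/ m)%N (blk_row s) = \sum_(b < q) \sum_(t < m) F b t.
Proof.
elim: q F => [|q IH] F; first by rewrite !big_ord0.
rewrite (@big_split_ord _ _ _ m (q * m)) big_ord_recl /=; congr (_ + _).
  apply: eq_bigr => i _; rewrite divn_small //.
  by congr (F _ _); apply: val_inj => /=; rewrite modn_small.
rewrite -(IH (fun b => F b.+1)); apply: eq_bigr => i _.
have m_gt0 : (0 < m)%N by case: m i F {IH} => [|m] [] //= i; rewrite muln0.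
rewrite /= -{1}(mul1n m) divnMDl //; congr (F _ _).
by apply: val_inj => /=; rewrite -{1}(mul1n m) modnMDl.
Qed.

Lemma blockmx_mul q p m c (G : nat -> nat -> 'M[R]_(p, m)) (H : nat -> 'M[R]_(m, c)) :
  blockmx q G *m colstack q H = colstack q (fun r => \sum_(s < q) G r s *m H s).
Proof.
apply/matrixP => r j; rewrite !mxE summxE.
under eq_bigr do rewrite !mxE.
rewrite (@sum_blocks q m (fun b t => G (r %/ p)%N b (blk_row r) t * H b t j)).
by apply: eq_bigr => b _; rewrite mxE.
Qed.

Lemma toeplitz_row p m q r (Dm : 'M[R]_(p, m)) (F : nat -> 'M[R]_(p, m))
    (w : nat -> 'cV[R]_m) : (r < q)%N ->
  \sum_(s < q) (if r == s then Dm else if (s < r)%N then F s else 0) *m w s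
  = Dm *m w r + \sum_(0 <= s < r) F s *m w s.
Proof.
move=> rq; rewrite -(big_mkord xpredT
  (fun s => (if r == s then Dm else if (s < r)%N then F s else 0) *m w s)).
rewrite (big_cat_nat _ (n := r)) //=; last exact: ltnW.
rewrite [\sum_(r <= i < q) _]big_ltn // eqxx addrC -addrA; congr (_ + _).
rewrite [X in X + _]big_nat_cond [X in X + _]big1 ?add0r; last first.
  move=> s /andP[/andP[rs sq] _]; have -> : (r == s) = false by apply/eqP; lia.
  by rewrite ltnNge (ltnW rs) mul0mx.
rewrite big_nat_cond [RHS]big_nat_cond; apply: eq_bigr => s /andP[/andP[_ sr] _].
by rewrite sr; have -> : (r == s) = false by apply/eqP; lia.
Qed.

Lemma mulmx_colwise a b c (X : 'M[R]_(a, b)) (v : 'I_c -> 'cV[R]_b) :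
  X *m (\matrix_(r, j) v j r 0) = \matrix_(r, j) (X *m v j) r 0.
Proof. by apply/matrixP => r j; rewrite !mxE; apply: eq_bigr => k _; rewrite mxE. Qed.

End BlockStacks.

Section SimilarSystems.
Variables (R : realFieldType) (n m p : nat) (modes : pred nat) (S : 'M[R]_n).
Variables (A A' : nat -> 'M[R]_n) (B B' : nat -> 'M[R]_(n, m))
  (C C' : nat -> 'M[R]_(p, n)) (D D' : nat -> 'M[R]_(p, m)).
Hypotheses (S_unit : S \in unitmx)
  (simA : {in modes, forall j, A' j = invmx S *m A j *m S})
  (simB : {in modes, forall j, B' j = invmx S *m B j})
  (simC : {in modes, forall j, C' j = C j *m S})
  (simD : {in modes, forall j, D' j = D j}).

Lemma similar_state (phi : nat -> nat) (u : nat -> 'cV[R]_m) (x0 : 'cV[R]_n) :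
  (forall k, phi k \in modes) ->
  forall k, lss_state A' B' phi u (invmx S *m x0) k = invmx S *m lss_state A B phi u x0 k.
Proof.
move=> phi_modes; elim=> [//|k IH] /=.
rewrite IH simA // simB // mulmxDr mulmxA; congr (_ + _).
  by rewrite -!mulmxA mulKVmx.
by rewrite mulmxA.
Qed.

Lemma similar_out (phi : nat -> nat) (u : nat -> 'cV[R]_m) (x0 : 'cV[R]_n) :
  (forall k, phi k \in modes) ->
  forall k, lss_out A' B' C' D' phi u (invmx S *m x0) k = lss_out A B C D phi u x0 k.
Proof.
move=> phi_modes k; rewrite /lss_out similar_state // simC // simD //.
by rewrite -!mulmxA mulKVmx.
Qed.

Lemma similar_Aword (w : seq nat) : all (mem modes) w ->
  Aword A' w = invmx S *m Aword A w *m S.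
Proof.
have conj_foldl (M0 : 'M[R]_n) v : all (mem modes) v ->
    foldl (fun M i => A' i *m M) (invmx S *m M0 *m S) v
    = invmx S *m foldl (fun M i => A i *m M) M0 v *m S.
  elim: v M0 => [//|j v IH] M0 /= /andP[jm vm].
  by rewrite -IH // simA // !mulmxA -(mulmxA _ S) mulmxV // mulmx1.
by move=> wm; rewrite /Aword -conj_foldl // mulmx1 mulVmx.
Qed.

Lemma similar_markov j0 j1 (w : seq nat) :
  j0 \in modes -> j1 \in modes -> all (mem modes) w ->
  lss_markov A' B' C' j0 w j1 = lss_markov A B C j0 w j1.
Proof.
move=> j0m j1m wm; rewrite /lss_markov similar_Aword // simC // simB //.
by rewrite !mulmxA -(mulmxA _ S) mulmxV // mulmx1 -(mulmxA (C j1)) mulmxV // mulmx1.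
Qed.

End SimilarSystems.

Section LTISegments.
Variable R : realFieldType.

Lemma sum_shift a b (G : nat -> 'M[R]_(a, b)) k0 r :
  \sum_(k0 <= l < k0 + r) G l = \sum_(0 <= s < r) G (k0 + s)%N.
Proof.
elim: r => [|r IH]; first by rewrite addn0 !big_geq.
by rewrite addnS !big_nat_recr ?leq_addr // IH.
Qed.

Lemma lti_window n m (A : 'M[R]_n) (B : 'M[R]_(n, m)) (x : nat -> 'cV[R]_n)
    (u : nat -> 'cV[R]_m) k0 d :
  (forall k, (k0 <= k < k0 + d)%N -> x k.+1 = A *m x k + B *m u k) ->
  forall r, (r <= d)%N -> x (k0 + r)%N = mxpow A r *m x k0 +
     \sum_(k0 <= l < k0 + r) mxpow A (k0 + r - l - 1) *m B *m u l.
Proof.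
move=> step; elim=> [|r IH] rd; first by rewrite addn0 big_geq // mul1mx addr0.
rewrite addnS step; last by lia.
rewrite IH; last by lia.
rewrite big_nat_recr ?leq_addr //=.
have -> : ((k0 + r).+1 - (k0 + r) - 1 = 0)%N by lia.
rewrite /= mul1mx mulmxDr mulmxA addrA; congr (_ + _ + _).
rewrite mulmx_sumr; apply: eq_big_nat => l /andP[_ lr].
have -> : ((k0 + r).+1 - l - 1 = (k0 + r - l - 1).+1)%N by lia.
by rewrite /= !mulmxA.
Qed.

Lemma toeplitz_residual n m p q (hA : nat -> 'M[R]_n) (hB : nat -> 'M[R]_(n, m))
    (hC : nat -> 'M[R]_(p, n)) (hD : nat -> 'M[R]_(p, m))
    (y : nat -> 'cV[R]_p) (u : nat -> 'cV[R]_m) mu k0 :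
  sigstack q y k0 - toeplitz q (hA mu) (hB mu) (hC mu) (hD mu) *m sigstack q u k0
  = sigstack q (zeta hA hB hC hD y u mu k0) k0.
Proof.
rewrite /sigstack /toeplitz blockmx_mul colstack_sub; apply: colstack_ext => r rq.
rewrite (@toeplitz_row _ _ _ _ r (hD mu)
  (fun s => hC mu *m mxpow (hA mu) (r - s - 1) *m hB mu) (fun s => u (k0 + s)%N)) //.
rewrite /zeta opprD addrA; congr (_ - _).
rewrite [RHS]sum_shift; apply: eq_big_nat => s _.
by have -> : (k0 + r - (k0 + s) - 1 = r - s - 1)%N by lia.
Qed.

End LTISegments.

Lemma bigminn_le k N0 (F : nat -> nat) i : (i < k)%N ->
  (\big[minn/N0]_(j < k) F j <= F i)%N.
Proof.
elim: k F i => [//|k IH] F [|i] ik; rewrite big_ord_recl /=; first exact: geq_minl.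
exact: leq_trans (geq_minr _ _) (IH (fun j => F j.+1) i ik).
Qed.

Section Identification.
Variables (R : realFieldType) (n m p sigma : nat)
  (A : nat -> 'M[R]_n) (B : nat -> 'M[R]_(n, m))
  (C : nat -> 'M[R]_(p, n)) (D : nat -> 'M[R]_(p, m))
  (N : nat) (u : nat -> 'cV[R]_m) (phi : nat -> nat) (y : nat -> 'cV[R]_p)
  (x : nat -> 'cV[R]_n) (ks : nat -> nat) (istar : nat)
  (hA : nat -> 'M[R]_n) (hB : nat -> 'M[R]_(n, m))
  (hC : nat -> 'M[R]_(p, n)) (hD : nat -> 'M[R]_(p, m))
  (T : nat -> 'M[R]_n).
Hypotheses (n_gt0 : (0 < n)%N)
  (phi_mode : forall k, (1 <= k <= N)%N -> (phi k < sigma)%N)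
  (x_step : forall k, (1 <= k < N)%N -> x k.+1 = A (phi k) *m x k + B (phi k) *m u k)
  (y_out : forall k, (1 <= k <= N)%N -> y k = C (phi k) *m x k + D (phi k) *m u k)
  (ks0 : ks 0%N = 1%N) (ks_last : ks istar.+1 = N)
  (ks_incr : forall i, (i <= istar)%N -> (ks i < ks i.+1)%N)
  (phi_const : forall i k, (i <= istar)%N -> (ks i <= k < ks i.+1)%N -> phi k = phi (ks i))
  (minimal : forall j, (j < sigma)%N -> minimal_lti (A j) (B j) (C j))
  (dwell : (n <= delta_star ks istar N)%N)
  (T_unit : forall j, (j < sigma)%N -> T j \in unitmx)
  (hAE : forall j, (j < sigma)%N -> hA j = invmx (T j) *m A j *m T j)
  (hBE : forall j, (j < sigma)%N -> hB j = invmx (T j) *m B j)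
  (hCE : forall j, (j < sigma)%N -> hC j = C j *m T j)
  (hDE : forall j, (j < sigma)%N -> hD j = D j)
  (Psi_rank : forall t, (t.+1 < sigma)%N ->
     \rank (Psi hA hB hC hD y u phi ks istar N t t.+1) = n).

Local Notation q := (qq ks istar N).
Local Notation O j := (obsmx q (hC j) (hA j)).

Lemma ks_mono i j : (i <= j <= istar.+1)%N -> (ks i <= ks j)%N.
Proof.
elim: j => [|j IH] /andP[ij jlast]; first by move: ij; rewrite leqn0 => /eqP ->.
case: (ltnP i j.+1) => [ij'|ji]; last by have -> : i = j.+1 by lia.
by apply: leq_trans (IH _) (ltnW (ks_incr _)); lia.
Qed.

Lemma ks_in_data i : (i <= istar.+1)%N -> (1 <= ks i <= N)%N.
Proof.
move=> i_le; apply/andP; split; first by rewrite -ks0 ks_mono.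
by rewrite -ks_last ks_mono // i_le leqnn.
Qed.

Lemma phi_ks i : (i <= istar.+1)%N -> (phi (ks i) < sigma)%N.
Proof. by move=> i_le; apply/phi_mode/ks_in_data. Qed.

Lemma window_in_interval i r : (i <= istar)%N -> (r < q.+1)%N -> (r < ks i.+1 - ks i)%N.
Proof.
move=> i_le; have gap : (delta_star ks istar N <= ks i.+1 - ks i)%N.
  exact: (bigminn_le N (fun i => ks i.+1 - ks i)%N).
rewrite /qq prednK => [rq|]; first exact: leq_trans rq gap.
exact: leq_trans n_gt0 dwell.
Qed.

Lemma interval_state i : (i <= istar)%N -> forall r, (r <= ks i.+1 - ks i)%N ->
  x (ks i + r)%N = mxpow (A (phi (ks i))) r *m x (ks i) +
    \sum_(ks i <= l < ks i + r) mxpow (A (phi (ks i))) (ks i + r - l - 1)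
          *m B (phi (ks i)) *m u l.
Proof.
move=> i_le; apply: lti_window => k k_in.
have := ks_in_data (i := i.+1) i_le; have := ks_in_data (leqW i_le).
move=> *; rewrite -(phi_const i_le (k := k)) ?x_step //; lia.
Qed.

Lemma interval_out i r : (i <= istar)%N -> (r < ks i.+1 - ks i)%N ->
  y (ks i + r)%N = C (phi (ks i)) *m x (ks i + r)%N + D (phi (ks i)) *m u (ks i + r)%N.
Proof.
move=> i_le r_lt; have := ks_in_data (i := i.+1) i_le; have := ks_in_data (leqW i_le).
move=> *; rewrite -(phi_const i_le (k := (ks i + r)%N)) ?y_out //; lia.
Qed.

Lemma hat_obs j c e (v : 'M[R]_(n, c)) : (j < sigma)%N ->
  hC j *m mxpow (hA j) e *m (invmx (T j) *m v) = C j *m mxpow (A j) e *m v.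
Proof. by move=> j_lt; rewrite hAE // hCE // similar_obs ?T_unit. Qed.

Lemma zeta_free_response i r : (i <= istar)%N -> (r < ks i.+1 - ks i)%N ->
  zeta hA hB hC hD y u (phi (ks i)) (ks i) (ks i + r)%N =
  hC (phi (ks i)) *m mxpow (hA (phi (ks i))) r *m (invmx (T (phi (ks i))) *m x (ks i)).
Proof.
move=> i_le r_lt; have j_lt := phi_ks (leqW i_le).
rewrite /zeta hat_obs // interval_out // (interval_state i_le (ltnW r_lt)) hDE //.
rewrite addrK mulmxDr mulmxA; apply/eqP; rewrite subr_eq; apply/eqP; congr (_ + _).
rewrite mulmx_sumr; apply: eq_bigr => l _.
by rewrite hBE // hat_obs // !mulmxA.
Qed.

Lemma Zvec_eq i : (i <= istar)%N ->
  Zvec hA hB hC hD y u ks istar N (phi (ks i)) (ks i)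
  = O (phi (ks i)) *m (invmx (T (phi (ks i))) *m x (ks i)).
Proof.
move=> i_le; rewrite /Zvec /sigstack /obsmx colstack_mul; apply: colstack_ext => r rq.
by rewrite zeta_free_response ?window_in_interval.
Qed.

(* Minimality of the true mode makes the estimated observability matrix
   injective, since the window has length q + 1 >= n. *)
Lemma obsmx_inj j (v : 'cV[R]_n) : (j < sigma)%N -> O j *m v = 0 -> v = 0.
Proof.
move=> j_lt; rewrite /obsmx colstack_mul => /colstack_eq0 Ov0.
have Tv0 : T j *m v = 0.
  apply: (minimal_observable (minimal j_lt)) => k k_lt.
  rewrite -(hat_obs _ _ j_lt) mulKmx ?T_unit // Ov0 //.
  by rewrite /qq prednK; lia.
by rewrite -(mulKmx (T_unit j_lt) v) Tv0 mulmx0.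
Qed.

Lemma xhat_eq i : (i <= istar)%N ->
  xhat hA hB hC hD y u ks istar N (phi (ks i)) (ks i) = invmx (T (phi (ks i))) *m x (ks i).
Proof.
move=> i_le; have j_lt := phi_ks (leqW i_le).
rewrite /xhat toeplitz_residual -/(Zvec _ _ _ _ _ _ _ _ _ _ _) Zvec_eq //.
by rewrite mulmxA pinvL_K ?mul1mx // => v; apply: obsmx_inj.
Qed.

Lemma kappa_eq i : (1 <= i <= istar)%N ->
  kappa hA hB hC hD y u ks istar N (phi (ks i.-1)) (ks i.-1) (ks i)
  = invmx (T (phi (ks i.-1))) *m x (ks i).
Proof.
case: i => [//|i] /= /ltnW i_le; have j_lt := phi_ks (leqW i_le).
set d := (ks i.+1 - ks i)%N.
have ksE : ks i.+1 = (ks i + d)%N by rewrite subnKC // ltnW // ks_incr.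
rewrite /kappa (xhat_eq i_le) ksE (interval_state i_le (leqnn d)) addKn mulmxDr mulmx_sumr hAE // mxpow_conj ?T_unit //.
congr (_ + _); first by rewrite !mulmxA mulmxK ?T_unit.
apply: eq_bigr => l _.
by rewrite hBE // mxpow_conj ?T_unit // !mulmxA mulmxK ?T_unit.
Qed.

Lemma Zmat_factor t : (t.+1 < sigma)%N ->
  Zmat hA hB hC hD y u phi ks istar N t t.+1
  = O t.+1 *m (invmx (T t.+1) *m T t) *m Psi hA hB hC hD y u phi ks istar N t t.+1.
Proof.
move=> t_lt; rewrite /Psi mulmx_colwise; apply/matrixP => r c; rewrite [LHS]mxE [RHS]mxE.
have := mem_nth 0%N (ltn_ord c).
rewrite mem_filter mem_iota => /andP[/andP[/eqP from_t /eqP to_t1] i_in].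
set i := nth 0%N _ c in from_t to_t1 i_in *.
have i_le : (1 <= i <= istar)%N by lia.
have := kappa_eq i_le; rewrite from_t => ->.
have := Zvec_eq (proj2 (andP i_le)); rewrite to_t1 => ->.
by rewrite !mulmxA mulmxK // T_unit // ltnW.
Qed.

Lemma Ups_eq t : (t.+1 < sigma)%N ->
  Ups hA hB hC hD y u phi ks istar N t = invmx (T t.+1) *m T t.
Proof.
move=> t_lt; rewrite /Ups Zmat_factor //.
set P := Psi _ _ _ _ _ _ _ _ _ _ _ _.
rewrite !mulmxA pinvL_K; last by move=> v; apply: obsmx_inj.
by rewrite mul1mx -!mulmxA pinvR_K ?mulmx1 // /row_free Psi_rank.
Qed.

Lemma Ups1_eq mu : (mu < sigma)%N ->
  Ups1 hA hB hC hD y u phi ks istar N mu = invmx (T 0%N) *m T mu.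
Proof.
have invUps t : (t.+1 < sigma)%N ->
    invmx (Ups hA hB hC hD y u phi ks istar N t) = invmx (T t) *m T t.+1.
  move=> t_lt; rewrite Ups_eq //; apply: invmx_of_right.
  by rewrite mulmxA mulmxK ?mulVmx ?T_unit //; lia.
have chain k a (M0 : 'M[R]_n) : (a + k < sigma)%N ->
    foldr (fun t M => invmx (Ups hA hB hC hD y u phi ks istar N t) *m M) M0 (iota a k)
    = invmx (T a) *m T (a + k)%N *m M0.
  elim: k a M0 => [|k IH] a M0 ak_lt /=.
    by rewrite addn0 mulVmx ?mul1mx // T_unit //; lia.
  rewrite IH ?invUps; try lia.
  by rewrite !mulmxA mulmxK ?addSnnS // T_unit //; lia.
by move=> mu_lt; rewrite /Ups1 (chain mu 0%N 1%:M) ?mulmx1.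
Qed.

Lemma check_similar j : (j < sigma)%N ->
  [/\ checkA hA hB hC hD y u phi ks istar N j = invmx (T 0%N) *m A j *m T 0%N,
      checkB hA hB hC hD y u phi ks istar N j = invmx (T 0%N) *m B j,
      checkC hA hB hC hD y u phi ks istar N j = C j *m T 0%N
    & checkD hD j = D j].
Proof.
move=> j_lt; have Tj_unit := T_unit j_lt.
have T0_unit : T 0%N \in unitmx by apply: T_unit; apply: leq_ltn_trans j_lt.
have Ups1_inv : invmx (Ups1 hA hB hC hD y u phi ks istar N j) = invmx (T j) *m T 0%N.
  by rewrite Ups1_eq //; apply: invmx_of_right; rewrite mulmxA mulmxK // mulVmx.
rewrite /checkA /checkB /checkC /checkD Ups1_inv Ups1_eq // hAE // hBE // hCE // hDE //.
by split; rewrite // !mulmxA !mulmxK.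
Qed.

End Identification.

Unset Implicit Arguments.
Set Strict Implicit.

(* The theorem (modes are numbered from 0, so T 0 is the paper's T_1):
   Upsilon(mu, 1) = T_0^-1 T_mu, and the checked LSS is the true one seen
   through the state transformation T_0. *)
Theorem theorem3 (R : realFieldType) (n m p sigma : nat)
  (A : nat -> 'M[R]_n) (B : nat -> 'M[R]_(n, m))
  (C : nat -> 'M[R]_(p, n)) (D : nat -> 'M[R]_(p, m))
  (N : nat) (u : nat -> 'cV[R]_m) (phi : nat -> nat) (y : nat -> 'cV[R]_p)
  (x : nat -> 'cV[R]_n)
  (ks : nat -> nat) (istar : nat)
  (hA : nat -> 'M[R]_n) (hB : nat -> 'M[R]_(n, m))
  (hC : nat -> 'M[R]_(p, n)) (hD : nat -> 'M[R]_(p, m))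
  (T : nat -> 'M[R]_n) :
  (2 <= n)%N ->
  (* the data are generated by the true LSS *)
  (forall k, (1 <= k <= N)%N -> (phi k < sigma)%N) ->
  (forall k, (1 <= k < N)%N -> x k.+1 = A (phi k) *m x k + B (phi k) *m u k) ->
  (forall k, (1 <= k <= N)%N -> y k = C (phi k) *m x k + D (phi k) *m u k) ->
  (* phi is surjective onto the discrete states *)
  (forall j, (j < sigma)%N -> exists k, (1 <= k <= N)%N /\ phi k = j) ->
  (* switching times *)
  ks 0%N = 1%N -> ks istar.+1 = N ->
  (forall i, (i <= istar)%N -> (ks i < ks i.+1)%N) ->
  (forall i k, (i <= istar)%N -> (ks i <= k < ks i.+1)%N -> phi k = phi (ks i)) ->
  (forall i, (1 <= i <= istar)%N -> phi (ks i) <> phi (ks i).-1) ->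
  (* standing assumptions on the modes *)
  (forall j, (j < sigma)%N -> minimal_lti (A j) (B j) (C j)) ->
  (forall j, (j < sigma)%N -> A j \in unitmx) ->
  (forall j, (j < sigma)%N -> bibo_stable (A j) (B j) (C j) (D j)) ->
  (n <= delta_star ks istar N)%N ->
  (* the estimates *)
  (forall j, (j < sigma)%N -> T j \in unitmx) ->
  (forall j, (j < sigma)%N -> hA j = invmx (T j) *m A j *m T j) ->
  (forall j, (j < sigma)%N -> hB j = invmx (T j) *m B j) ->
  (forall j, (j < sigma)%N -> hC j = C j *m T j) ->
  (forall j, (j < sigma)%N -> hD j = D j) ->
  (* rank condition *)
  (forall t, (t.+1 < sigma)%N -> \rank (Psi hA hB hC hD y u phi ks istar N t t.+1) = n) ->
  (forall mu, (mu < sigma)%N ->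
     Ups1 hA hB hC hD y u phi ks istar N mu = invmx (T 0%N) *m T mu)
  /\
  (forall (phi' : nat -> nat) (u' : nat -> 'cV[R]_m) (x0 : 'cV[R]_n),
     (forall k, (phi' k < sigma)%N) ->
     forall k,
       lss_out (checkA hA hB hC hD y u phi ks istar N)
               (checkB hA hB hC hD y u phi ks istar N)
               (checkC hA hB hC hD y u phi ks istar N)
               (checkD hD) phi' u' (invmx (T 0%N) *m x0) k
       = lss_out A B C D phi' u' x0 k)
  /\
  (forall (j0 j1 : nat) (w : seq nat),
     (j0 < sigma)%N -> (j1 < sigma)%N -> all (fun j => (j < sigma)%N) w ->
     lss_markov (checkA hA hB hC hD y u phi ks istar N)
                (checkB hA hB hC hD y u phi ks istar N)
                (checkC hA hB hC hD y u phi ks istar N) j0 w j1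
     = lss_markov A B C j0 w j1
     /\ checkD hD j1 = D j1).

Proof.
move=> n_ge2 phi_mode x_step y_out _ ks0 ks_last ks_incr phi_const _ minimal _ _ dwell
  T_unit hAE hBE hCE hDE Psi_rank.
have n_gt0 : (0 < n)%N by apply: ltnW.
have sim := check_similar n_gt0 phi_mode x_step y_out ks0 ks_last ks_incr phi_const
  minimal dwell T_unit hAE hBE hCE hDE Psi_rank.
have T0_unit j : (j < sigma)%N -> T 0%N \in unitmx.
  by move=> j_lt; apply: T_unit; apply: leq_ltn_trans j_lt.
pose modes : pred nat := fun j => (j < sigma)%N.
split; first exact: Ups1_eq n_gt0 phi_mode x_step y_out ks0 ks_last ks_incr phi_const
  minimal dwell T_unit hAE hBE hCE hDE Psi_rank.
split=> [phi' u' x0 phi'_modes k | j0 j1 w j0_lt j1_lt w_modes].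
  by apply: (similar_out (modes := modes) (T0_unit _ (phi'_modes 0%N))) => // j /sim[].
split; last by case: (sim _ j1_lt).
by apply: (similar_markov (modes := modes) (T0_unit _ j0_lt)) => // j /sim[].
Qed.
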